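(* In the setting of the context, for every $N$-tuple of integers $\mathbf{i}=(i_1,\dots,i_N)$ with $0\le i_k\le\ell_k$, define \[ V_{\mathbf{i}}=\sum_{\mathbf{n}=\mathbf{0}}^{\mathbf{i}}\mathscr{D}_{\mathbf{n},\mathbf{i}}V^{\mathbf{n}},\qquad \mathscr{D}_{\mathbf{n},\mathbf{i}}=\frac{(-1)^{|\mathbf{n}|-|\mathbf{i}|}}{(|\mathbf{i}|+|\mathbf{n}|+\omega^\star)_{|\mathbf{i}|-|\mathbf{n}|}}\prod_{p=1}^N\binom{\ell_p-n_p}{\ell_p-i_p}\big(|\mathbf{i}|_1^{p-1}+|\mathbf{n}|_1^{p}+|\boldsymbol{\ell}|_{p+1}^N-a_p+\omega^\star\big)_{i_p-n_p}. \] Then $A^\star V_{\mathbf{i}}=\theta^\star_{|\mathbf{i}|}V_{\mathbf{i}}$.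
   Context: Notation: for $N$-tuples of integers, $|\mathbf{n}|_j^k=\sum_{p=j}^k n_p$ (equal to $0$ if $j>k$), $|\mathbf{n}|=|\mathbf{n}|_1^N$, $\mathbf{e}_p$ the $p$-th unit $N$-tuple, $\mathbf{0}=(0,\dots,0)$; $(x)_k=x(x+1)\cdots(x+k-1)$, $(x)_0=1$. A sum $\sum_{\mathbf{n}=\mathbf{a}}^{\mathbf{b}}$ means the sum over all $\mathbf{n}$ with $a_p\le n_p\le b_p$ for every $p$. Setting: $N\ge1$, $\boldsymbol{\ell}=(\ell_1,\dots,\ell_N)$ nonnegative integers, $\mathcal{V}=\mathbb{C}^{\ell_1+1}\otimes\cdots\otimes\mathbb{C}^{\ell_N+1}$ with basis $V^{\mathbf{n}}$, $0\le n_p\le\ell_p$; $V^{\mathbf{n}}=0$ if some $n_p<0$ or $n_p>\ell_p$. Scalars $\theta_0,\theta_0^\star,h,h^\star,\omega,\omega^\star,a_1,\dots,a_N\in\mathbb{C}$; $\theta_i=\theta_0+hi(i+\omega)$, $\theta^\star_i=\theta^\star_0+h^\star i(i+\omega^\star)$; $\xi_{\mathbf{n},p}=h(|\mathbf{n}|_1^{p-1}+|\mathbf{n}|_1^p+|\boldsymbol{\ell}|_p^N+a_p+\omega)n_p$, $\xi^\star_{\mathbf{n},p}=h^\star(|\mathbf{n}|_1^{p-1}+|\mathbf{n}|_1^p+|\boldsymbol{\ell}|_{p+1}^N-a_p+\omega^\star)(n_p-\ell_p)$. Operators: $A V^{\mathbf{n}}=\theta_{|\mathbf{n}|}V^{\mathbf{n}}+\sum_{p=1}^N\xi_{\mathbf{n}+\mathbf{e}_p,p}V^{\mathbf{n}+\mathbf{e}_p}$,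 $A^\star V^{\mathbf{n}}=\theta^\star_{|\mathbf{n}|}V^{\mathbf{n}}+\sum_{p=1}^N\xi^\star_{\mathbf{n}-\mathbf{e}_p,p}V^{\mathbf{n}-\mathbf{e}_p}$. Standing constraints: $h,h^\star\neq0$; $\omega,\omega^\star\notin\{-2|\boldsymbol{\ell}|+1,\dots,-1\}$; for each $i$, none of $a_i,\ a_i+\omega-\omega^\star,\ a_i-|\boldsymbol{\ell}|-\omega^\star,\ a_i+|\boldsymbol{\ell}|+\omega$ lies in $\{-\ell_i,\dots,-1\}$; and with $S^\pm(\ell,a)=\{\pm(a+k+\tfrac12(\omega-\omega^\star)):k=1,\dots,\ell\}$, for all $i,j$ and signs, $S^{\epsilon_i}(\ell_i,a_i)$ and $S^{\epsilon_j}(\ell_j,a_j)$ are in general position (one contains the other or their union is not a string). *)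

From HB Require Import structures.
From mathcomp Require Import all_boot all_order all_algebra.
Set Implicit Arguments. Unset Strict Implicit. Unset Printing Implicit Defensive.
Import Order.TTheory GRing.Theory Num.Theory.
Local Open Scope ring_scope.

Section Defs.
Variable C : numClosedFieldType.
Variable N : nat.

(* N-tuples are functions 'I_N -> nat (nonnegative) or 'I_N -> int.
   Index p : 'I_N is 0-based: p stands for the paper's index p+1. *)

Definition totn (n : 'I_N -> nat) : nat := (\sum_(q < N) n q)%N.
Definition totz (n : 'I_N -> int) : int := \sum_(q < N) n q.
(* |n|_1^{p-1}  (paper index p = our p+1) *)
Definition preZ (n : 'I_N -> int) (p : 'I_N) : int := \sum_(q < N | (q < p)%N) n q.
Definition preIZ (n : 'I_N -> int) (p : 'I_N) : int := \sum_(q < N | (q <= p)%N) n q.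
Definition sufZ (n : 'I_N -> int) (p : 'I_N) : int := \sum_(q < N | (p < q)%N) n q.
Definition sufIZ (n : 'I_N -> int) (p : 'I_N) : int := \sum_(q < N | (p <= q)%N) n q.

Definition toZ (n : 'I_N -> nat) : 'I_N -> int := fun q => (n q)%:Z.

Definition poch (x : C) (k : nat) : C := \prod_(j < k) (x + j%:R).

Definition boxsum (b : 'I_N -> nat) (F : ('I_N -> nat) -> C) : C :=
  \sum_(n : {ffun 'I_N -> 'I_(\max_(q < N) b q).+1} | [forall p, (n p <= b p)%N])
     F (fun p => nat_of_ord (n p)).

(* vectors of the space V: coefficient functions on integer N-tuples
   (coordinates w.r.t. the basis V^n; only the box 0 <= n_p <= l_p is meaningful) *)
Definition vect := ('I_N -> int) -> C.

Definition inbox (ell : 'I_N -> nat) (k : 'I_N -> int) : bool :=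
  [forall p, (0 <= k p) && (k p <= (ell p)%:Z)].

(* basis vector V^k, with V^k = 0 if k lies outside the box *)
Definition Vb (ell : 'I_N -> nat) (k : 'I_N -> int) : vect :=
  fun m => if inbox ell k && [forall p, m p == k p] then 1 else 0.

Definition thetaS (thS0 hS omS : C) (k : nat) : C := thS0 + hS * k%:R * (k%:R + omS).

Definition xiS (ell : 'I_N -> nat) (hS omS : C) (a : 'I_N -> C)
    (n : 'I_N -> int) (p : 'I_N) : C :=
  hS * ((preZ n p + preIZ n p + sufZ (toZ ell) p)%:~R - a p + omS)
     * (n p - (ell p)%:Z)%:~R.

Definition subE (n : 'I_N -> int) (p : 'I_N) : 'I_N -> int :=
  fun q => n q - (q == p)%:Z.

Definition AstarB (ell : 'I_N -> nat) (thS0 hS omS : C) (a : 'I_N -> C)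
    (n : 'I_N -> nat) : vect :=
  fun m => thetaS thS0 hS omS (totn n) * Vb ell (toZ n) m
           + \sum_(p < N) xiS ell hS omS a (subE (toZ n) p) p * Vb ell (subE (toZ n) p) m.

Definition Astar (ell : 'I_N -> nat) (thS0 hS omS : C) (a : 'I_N -> C)
    (v : vect) : vect :=
  fun m => boxsum ell (fun n => v (toZ n) * AstarB ell thS0 hS omS a n m).

Definition Dcoef (ell : 'I_N -> nat) (omS : C) (a : 'I_N -> C)
    (n i : 'I_N -> nat) : C :=
  ((-1) ^ (totz (toZ n) - totz (toZ i))
   / poch ((totn i + totn n)%:R + omS) (totn i - totn n))
  * \prod_(p < N) ('C(ell p - n p, ell p - i p)%:R
       * poch ((preZ (toZ i) p + preIZ (toZ n) p + sufZ (toZ ell) p)%:~R - a p + omS)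
              (i p - n p)).

Definition Vi (ell : 'I_N -> nat) (omS : C) (a : 'I_N -> C) (i : 'I_N -> nat) : vect :=
  fun m => boxsum i (fun n => Dcoef ell omS a n i * Vb ell (toZ n) m).

Definition is_string (S : seq C) : Prop :=
  exists (x : C) (r : nat), forall z, z \in S <-> exists2 j : nat, (j <= r)%N & z = x + j%:R.

Definition general_position (S1 S2 : seq C) : Prop :=
  {subset S1 <= S2} \/ {subset S2 <= S1} \/ ~ is_string (S1 ++ S2).

(* S^{+}(l,a) for sgn = true, S^{-}(l,a) for sgn = false *)
Definition Sset (om omS : C) (sgn : bool) (l : nat) (a : C) : seq C :=
  [seq (if sgn then 1 else -1) * (a + k%:R + (om - omS) / 2%:R) | k <- iota 1 l].

End Defs.

From HB Require Import structures.
From mathcomp Require Import all_boot all_order all_algebra.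
From Stdlib Require Import FunctionalExtensionality.
From mathcomp Require Import zify ring.
Import Order.TTheory GRing.Theory Num.Theory.
Local Open Scope ring_scope.
Set Implicit Arguments. Unset Strict Implicit. Unset Printing Implicit Defensive.

(* Reading off the coordinate of V^m, the claim is the scalar identity
     thetaS_{|m|} D_{m,i} + sum_p xiS_{m,p} D_{m+e_p,i} = thetaS_{|i|} D_{m,i}.
   Since thetaS_{|i|} - thetaS_{|m|} = hS (|i| - |m|) (|i| + |m| + omS) and the Pochhammer
   prefactors of D_{m,i} and D_{m+e_p,i} differ exactly by the factor |i| + |m| + omS,
   nonzero by the constraint on omS, it reduces to
     sum_p xiS_{m,p} prod_q F_q(m+e_p) = - hS (|i| - |m|) prod_q F_q(m)
   for the product part F of D.  Raising m_p by one leaves the factors q < p unchanged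
   and shifts the Pochhammer argument of every factor q > p by one, so the left side
   telescopes along p: it is T_N - T_0 for
     T_n = s_n prod_{q<n} F_q(m) prod_{q>=n} F_q(m)[argument + 1],
   where s_n = - hS sum_{r<n} (i_r - m_r). *)

Section OrdinalBigops.
Variables (R : Type) (idx : R) (op : Monoid.com_law idx) (N : nat).

Lemma big_ord_ltS (p : 'I_N) (F : 'I_N -> R) :
  \big[op/idx]_(q < N | (q < p.+1)%N) F q = op (\big[op/idx]_(q < N | (q < p)%N) F q) (F p).
Proof.
rewrite (bigD1 p) 1?Monoid.mulmC //=; congr (op _ _); apply: eq_bigl => q.
by rewrite ltnS -val_eqE /=; case: ltngtP.
Qed.

Lemma big_ord_geq (p : 'I_N) (F : 'I_N -> R) :
  \big[op/idx]_(q < N | (p <= q)%N) F q = op (F p) (\big[op/idx]_(q < N | (p < q)%N) F q).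
Proof.
rewrite (bigD1 p) //=; congr (op _ _); apply: eq_bigl => q.
by rewrite -val_eqE /=; case: ltngtP.
Qed.

Lemma big_ord_around (p : 'I_N) (F : 'I_N -> R) :
  \big[op/idx]_q F q
  = op (op (\big[op/idx]_(q < N | (q < p)%N) F q) (F p)) (\big[op/idx]_(q < N | (p < q)%N) F q).
Proof.
rewrite (bigID (fun q : 'I_N => (q < p)%N)) /=.
rewrite [X in op _ X](eq_bigl (fun q : 'I_N => (p <= q)%N)) => [|q]; last by rewrite ltnNge negbK.
by rewrite big_ord_geq Monoid.mulmA.
Qed.

End OrdinalBigops.

Lemma sum_prod_telescope (R : comPzRingType) (N : nat) (s : nat -> R)
    (f g c : 'I_N -> R) :
  s 0%N = 0 -> (forall p : 'I_N, s p.+1 * f p - s p * g p = c p) ->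
  \sum_p c p * (\prod_(q < N | (q < p)%N) f q) * \prod_(q < N | (p < q)%N) g q
  = s N * \prod_q f q.
Proof.
move=> s0 step.
pose T n := s n * (\prod_(q < N | (q < n)%N) f q) * \prod_(q < N | (n <= q)%N) g q.
have TN : T N = s N * \prod_q f q.
  rewrite /T [X in _ * X]big_pred0 => [|q]; last by rewrite leqNgt ltn_ord.
  by rewrite mulr1; congr (_ * _); apply: eq_bigl => q; rewrite ltn_ord.
have T0 : T 0%N = 0 by rewrite /T s0 !mul0r.
have := telescope_sumr T (leq0n N); rewrite T0 subr0 TN big_mkord => <-.
apply: eq_bigr => p _; rewrite /T big_ord_ltS big_ord_geq /= -step; ring.
Qed.

Section Pochhammer.
Variable C : numClosedFieldType.
Implicit Types (x s : C) (d : nat).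

Lemma pochS x d : poch x d.+1 = x * poch (x + 1) d.
Proof.
rewrite /poch big_ord_recl addr0; congr (_ * _); apply: eq_bigr => j _.
by rewrite lift0 mulrSr; ring.
Qed.

Lemma pochSr x d : poch x d.+1 = poch x d * (x + d%:R).
Proof. by rewrite /poch big_ord_recr. Qed.

Lemma poch_telescope x s d :
  (s + d%:R) * poch x d - s * poch (x + 1) d = d%:R * (x - s) * poch (x + 1) d.-1.
Proof.
case: d => [|d]; first by rewrite /poch !big_ord0; ring.
rewrite (pochS x) pochSr -natr1; ring.
Qed.

End Pochhammer.

Definition addE (N : nat) (m : 'I_N -> nat) (p : 'I_N) : 'I_N -> nat :=
  fun q => (m q + (q == p))%N.

Section TupleSums.
Variable N : nat.
Implicit Types (m n : 'I_N -> nat) (p q : 'I_N).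

Lemma totz_toZ n : totz (toZ n) = (totn n)%:Z.
Proof. by rewrite /totz /totn /toZ (big_morph _ PoszD (erefl 0%:Z)). Qed.

Lemma totn_addE m p : totn (addE m p) = (totn m).+1.
Proof.
rewrite /totn /addE big_split /= -addn1; congr addn.
by rewrite (bigD1 p) //= eqxx big1 // => q /negbTE ->.
Qed.

Lemma preIZ_addE m p q :
  preIZ (toZ (addE m p)) q = preIZ (toZ m) q + ((p <= q)%N : nat)%:Z.
Proof.
rewrite /preIZ /toZ /addE; under eq_bigr do rewrite PoszD.
rewrite big_split /=; congr (_ + _).
rewrite big_mkcond (bigD1 p) //= eqxx big1 ?addr0; first by case: (p <= q)%N.
by move=> r /negbTE ->; case: ifP.
Qed.

Lemma addE_le m n p :
  (forall q, (m q <= n q)%N) -> [forall q, (addE m p q <= n q)%N] = (m p < n p)%N.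
Proof.
move=> le_mn; apply/forallP/idP => [/(_ p) | lt_p q]; first by rewrite /addE eqxx addn1.
by rewrite /addE; case: eqP => [-> | _]; rewrite ?addn1 ?addn0.
Qed.

End TupleSums.

Lemma signr_subz (R : unitRingType) (k n : nat) :
  (k <= n)%N -> (-1 : R) ^ (k%:Z - n%:Z) = (-1) ^+ (n - k).
Proof.
move=> le_kn; rewrite -(subnKC le_kn) PoszD opprD addrA subrr add0r addKn.
by rewrite -exprz_inv invrN1.
Qed.

Section EigenCoefficients.
Variables (C : numClosedFieldType) (N : nat) (ell : 'I_N -> nat) (omS : C) (a : 'I_N -> C).
Variable i : 'I_N -> nat.
Hypothesis le_i_ell : forall p, (i p <= ell p)%N.
Implicit Types (m : 'I_N -> nat) (p q : 'I_N).

Definition Darg m q : C :=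
  (preZ (toZ i) q + preIZ (toZ m) q + sufZ (toZ ell) q)%:~R - a q + omS.

Definition Dfactor m q : C :=
  'C(ell q - m q, ell q - i q)%:R * poch (Darg m q) (i q - m q).

Definition gap m (n : nat) : nat := \sum_(r < N | (r < n)%N) (i r - m r).

Lemma DcoefE m : (totn m <= totn i)%N ->
  Dcoef ell omS a m i = (-1) ^+ (totn i - totn m)
    / poch ((totn i + totn m)%:R + omS) (totn i - totn m) * \prod_q Dfactor m q.
Proof. by move=> le_mi; rewrite /Dcoef !totz_toZ signr_subz. Qed.

Lemma totn_gap m : (forall p, (m p <= i p)%N) -> totn i = (totn m + gap m N)%N.
Proof.
move=> le_mi; have -> : gap m N = (\sum_r (i r - m r))%N.
  by apply: eq_bigl => r; rewrite ltn_ord.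
by rewrite /totn -big_split; apply: eq_bigr => r _; rewrite /= subnKC.
Qed.

Lemma Darg_addE m p q : Darg (addE m p) q = Darg m q + ((p <= q)%N : nat)%:R.
Proof. by rewrite /Darg preIZ_addE !intrD -pmulrn; ring. Qed.

Lemma xiS_Darg hS m p : (forall p, (m p <= i p)%N) ->
  xiS ell hS omS a (toZ m) p = - hS * (Darg m p - (gap m p)%:R) * (ell p - m p)%:R.
Proof.
move=> le_mi.
have preZ_i : preZ (toZ i) p = preZ (toZ m) p + (gap m p)%:Z.
  rewrite /preZ /gap /toZ (big_morph _ PoszD (erefl 0%:Z)) -big_split.
  by apply: eq_bigr => r _; rewrite /= -PoszD subnKC.
rewrite /xiS /Darg preZ_i /toZ intrB natrB ?(leq_trans (le_mi p)) // !intrD.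
rewrite -!pmulrn; ring.
Qed.

Lemma Dfactor_addE_lt m p q : (q < p)%N -> Dfactor (addE m p) q = Dfactor m q.
Proof.
move=> lt_qp; have ne_qp : (q == p) = false by apply/negbTE; rewrite -val_eqE neq_ltn lt_qp.
by rewrite /Dfactor Darg_addE leqNgt lt_qp /addE ne_qp addr0 addn0.
Qed.

Definition Dfactor1 m q : C :=
  'C(ell q - m q, ell q - i q)%:R * poch (Darg m q + 1) (i q - m q).

Lemma Dfactor_addE_gt m p q : (p < q)%N -> Dfactor (addE m p) q = Dfactor1 m q.
Proof.
move=> lt_pq; have ne_qp : (q == p) = false by apply/negbTE; rewrite -val_eqE neq_ltn lt_pq orbT.
by rewrite /Dfactor Darg_addE (ltnW lt_pq) /addE ne_qp addn0.
Qed.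

Lemma Dfactor_addE_eq m p : (m p < i p)%N ->
  (ell p - m p)%:R * Dfactor (addE m p) p
  = (i p - m p)%:R * 'C(ell p - m p, ell p - i p)%:R * poch (Darg m p + 1) (i p - m p).-1.
Proof.
move=> lt_p; have le_p := le_i_ell p; rewrite /Dfactor.
have -> : (ell p - addE m p p = (ell p - m p).-1)%N by rewrite /addE eqxx; lia.
have -> : (i p - addE m p p = (i p - m p).-1)%N by rewrite /addE eqxx; lia.
rewrite Darg_addE leqnn mulrA -natrM mul_bin_down.
have -> : (ell p - m p - (ell p - i p) = i p - m p)%N by lia.
by rewrite natrM.
Qed.

Definition Dstep m p : C :=
  (Darg m p - (gap m p)%:R) * (i p - m p)%:R * 'C(ell p - m p, ell p - i p)%:R
  * poch (Darg m p + 1) (i p - m p).-1.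

Lemma xiS_prod_Dfactor_addE hS m p : (forall p, (m p <= i p)%N) -> (m p < i p)%N ->
  xiS ell hS omS a (toZ m) p * \prod_q Dfactor (addE m p) q
  = - hS * Dstep m p
      * (\prod_(q < N | (q < p)%N) Dfactor m q) * \prod_(q < N | (p < q)%N) Dfactor1 m q.
Proof.
move=> le_mi lt_p; rewrite (big_ord_around _ p) /= xiS_Darg //.
rewrite (eq_bigr _ (fun q lt_qp => Dfactor_addE_lt m lt_qp)).
rewrite (eq_bigr _ (fun q lt_pq => Dfactor_addE_gt m lt_pq)).
set A := \prod_(q < N | (q < p)%N) _; set B := \prod_(q < N | (p < q)%N) _.
transitivity (- hS * (Darg m p - (gap m p)%:R) * A * B * ((ell p - m p)%:R * Dfactor (addE m p) p)).
  ring.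
by rewrite Dfactor_addE_eq // /Dstep; ring.
Qed.

Lemma sum_xiS_Dfactor hS m : (forall p, (m p <= i p)%N) ->
  \sum_(p < N | (m p < i p)%N) xiS ell hS omS a (toZ m) p * \prod_q Dfactor (addE m p) q
  = - hS * (gap m N)%:R * \prod_q Dfactor m q.
Proof.
move=> le_mi; rewrite -(@sum_prod_telescope _ _ (fun n => - hS * (gap m n)%:R) _ (Dfactor1 m)
  (fun p => - hS * Dstep m p)).
- rewrite big_mkcond; apply: eq_bigr => p _ /=; case: ltnP => [lt_p | ge_p].
    exact: xiS_prod_Dfactor_addE.
  by rewrite /Dstep (_ : i p - m p = 0)%N; [ring | lia].
- by rewrite /gap big_pred0 ?mulr0.
- move=> p; rewrite /Dfactor /Dfactor1 /Dstep.
  have -> : gap m p.+1 = (gap m p + (i p - m p))%N by rewrite /gap big_ord_ltS.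
  set x := Darg m p; set S := gap m p; set e := (i p - m p)%N; set b := 'C(_, _)%:R.
  transitivity (- hS * b * ((S%:R + e%:R) * poch x e - S%:R * poch (x + 1) e)).
    by rewrite natrD; ring.
  by rewrite poch_telescope; ring.
Qed.

Lemma Dcoef_eigen thS0 hS m :
  (forall k : nat, (1 <= k <= (2 * totn ell).-1)%N -> omS != - k%:R) ->
  (forall p, (m p <= i p)%N) ->
  thetaS thS0 hS omS (totn m) * Dcoef ell omS a m i
  + \sum_(p < N | (m p < i p)%N) xiS ell hS omS a (toZ m) p * Dcoef ell omS a (addE m p) i
  = thetaS thS0 hS omS (totn i) * Dcoef ell omS a m i.
Proof.
move=> HomS le_mi; have tot_i := totn_gap le_mi.
have [gap0 | gap_pos] := posnP (gap m N).
  rewrite tot_i gap0 addn0 big_pred0 ?addr0 // => p; apply/negbTE; rewrite -leqNgt.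
  move/eqP: gap0; rewrite sum_nat_eq0 => /forallP /(_ p) /implyP.
  by rewrite ltn_ord subn_eq0 => /(_ isT).
have lt_tot : (totn m < totn i)%N by lia.
have le_tot_ell : (totn i <= totn ell)%N by apply: leq_sum => q _.
set x0 : C := (totn i + totn m)%:R + omS.
have x0_neq0 : x0 != 0.
  by rewrite /x0 addrC addr_eq0; apply: HomS; lia.
set d := (totn i - (totn m).+1)%N.
have x0S : (totn i + (totn m).+1)%:R + omS = x0 + 1 by rewrite /x0 addnS -addn1 natrD; ring.
have gapE : gap m N = d.+1 by rewrite /d; lia.
rewrite DcoefE ?(ltnW lt_tot) // -/x0 (_ : totn i - totn m = d.+1)%N; last by rewrite /d; lia.
under [X in _ + X = _]eq_bigr => p _ do rewrite DcoefE ?totn_addE // -/d x0S mulrCA.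
rewrite -mulr_sumr sum_xiS_Dfactor // gapE pochS exprS.
have -> : thetaS thS0 hS omS (totn i) = thetaS thS0 hS omS (totn m) + hS * d.+1%:R * x0.
  by rewrite /thetaS /x0 tot_i gapE natrD; ring.
rewrite [RHS]mulrDl; congr (_ + _).
transitivity (- hS * d.+1%:R * (-1) ^+ d / poch (x0 + 1) d * \prod_q Dfactor m q * (x0 * x0^-1)).
  by rewrite mulfV // mulr1; ring.
by rewrite invfM; ring.
Qed.

End EigenCoefficients.

Section Coordinates.
Variables (C : numClosedFieldType) (N : nat) (ell : 'I_N -> nat).
Implicit Types (k m : 'I_N -> int) (n : 'I_N -> nat) (p : 'I_N).

Lemma toZ_inj : injective (@toZ N).
Proof.
move=> n n' E; apply: functional_extensionality => p.
by apply/eqP; rewrite -eqz_nat -/(toZ n p) E.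
Qed.

Lemma subE_toZ_addE n p : subE (toZ (addE n p)) p = toZ n.
Proof. by apply: functional_extensionality => q; rewrite /subE /toZ /addE PoszD addrK. Qed.

Lemma subE_toZ_eq n n' p : subE (toZ n) p = toZ n' -> n = addE n' p.
Proof.
move=> E; apply: toZ_inj; apply: functional_extensionality => q.
have := congr1 (fun k => k q + (q == p)%:Z) E; rewrite /= /subE subrK => ->.
by rewrite /toZ /addE PoszD.
Qed.

Lemma inbox_toZ n : (forall p, (n p <= ell p)%N) -> inbox ell (toZ n).
Proof. by move=> le_n; apply/forallP => p; rewrite /toZ lez_nat le_n. Qed.

Lemma inboxP k : inbox ell k -> exists2 n, (forall p, (n p <= ell p)%N) & k = toZ n.
Proof.
move=> /forallP k_in; exists (fun p => `|k p|%N) => [p | ].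
  by case/andP: (k_in p) => k_ge0; rewrite -lez_nat gez0_abs.
apply: functional_extensionality => p; rewrite /toZ gez0_abs //.
by case/andP: (k_in p).
Qed.

Lemma Vb_neq k m : k <> m -> Vb C ell k m = 0.
Proof.
move=> ne_km; rewrite /Vb; case: ifP => // /andP[_ /forallP eq_mk]; case: ne_km.
by apply: functional_extensionality => p; rewrite (eqP (eq_mk p)).
Qed.

Lemma Vb_out k m : ~~ inbox ell m -> Vb C ell k m = 0.
Proof.
move=> m_out; rewrite /Vb; case: ifP => // /andP[k_in /forallP eq_mk].
suff eq_km : k = m by move: k_in; rewrite eq_km (negbTE m_out).
by apply: functional_extensionality => p; rewrite (eqP (eq_mk p)).
Qed.

Lemma Vb_toZ n : (forall p, (n p <= ell p)%N) -> Vb C ell (toZ n) (toZ n) = 1.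
Proof.
move=> le_n; rewrite /Vb inbox_toZ //.
by have -> : [forall p, toZ n p == toZ n p] by apply/forallP.
Qed.

Lemma boxsum_delta b (F : ('I_N -> nat) -> C) n0 :
  (forall n, (forall p, (n p <= b p)%N) -> n <> n0 -> F n = 0) ->
  boxsum b F = if [forall p, (n0 p <= b p)%N] then F n0 else 0.
Proof.
move=> F_supp; rewrite /boxsum.
have le_max p : (b p <= \max_(q < N) b q)%N by exact: (leq_bigmax p).
move: (\max_(q < N) b q) le_max => M le_max.
case: ifP => [/forallP n0_in | n0_out].
  have lt_n0 p : (n0 p < M.+1)%N by rewrite ltnS (leq_trans (n0_in p)).
  pose f0 : {ffun 'I_N -> 'I_M.+1} := [ffun p => Ordinal (lt_n0 p)].
  rewrite (bigD1 f0) /=; last by apply/forallP => p; rewrite ffunE n0_in.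
  rewrite big1 ?addr0; first by congr F; apply: functional_extensionality => p; rewrite ffunE.
  move=> f /andP[/forallP f_in ne_f]; apply: F_supp => // E; case/eqP: ne_f.
  by apply/ffunP => p; apply/val_inj; rewrite ffunE /= -E.
apply: big1 => f /forallP f_in; apply: F_supp => // E; move/negP: n0_out; apply.
by apply/forallP => p; rewrite -E.
Qed.

Variables (thS0 hS omS : C) (a : 'I_N -> C).

Lemma xiS_toZ_ell n p : n p = ell p -> xiS ell hS omS a (toZ n) p = 0.
Proof. by move=> E; rewrite /xiS /toZ E subrr mulr0. Qed.

Lemma Astar_toZ (v : vect C N) n : (forall p, (n p <= ell p)%N) ->
  Astar ell thS0 hS omS a v (toZ n)
  = thetaS thS0 hS omS (totn n) * v (toZ n)
    + \sum_p xiS ell hS omS a (toZ n) p * v (toZ (addE n p)).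
Proof.
move=> le_n.
have -> : Astar ell thS0 hS omS a v (toZ n)
  = boxsum ell (fun n' => thetaS thS0 hS omS (totn n') * v (toZ n') * Vb C ell (toZ n') (toZ n))
    + \sum_p boxsum ell (fun n' => xiS ell hS omS a (subE (toZ n') p) p * v (toZ n')
                                   * Vb C ell (subE (toZ n') p) (toZ n)).
  rewrite /Astar /boxsum -exchange_big -big_split; apply: eq_bigr => n' _.
  by rewrite /AstarB mulrDr mulr_sumr; congr (_ + _); [ring | apply: eq_bigr => p _; ring].
rewrite (boxsum_delta (n0 := n)) => [|n' _ ne]; last by rewrite Vb_neq ?mulr0 // => /toZ_inj.
have -> : [forall p, (n p <= ell p)%N] by apply/forallP.
rewrite Vb_toZ // mulr1; congr (_ + _); apply: eq_bigr => p _.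
rewrite (boxsum_delta (n0 := addE n p)) => [|n' _ ne]; last first.
  by rewrite Vb_neq ?mulr0 // => /subE_toZ_eq.
rewrite subE_toZ_addE Vb_toZ // mulr1; case: ifP => // /negbT.
(* n + e_p leaves the box only if n_p = ell_p, and then xiS_{n,p} = 0 *)
rewrite (addE_le _ le_n) -leqNgt => ge_p.
by rewrite xiS_toZ_ell ?mul0r //; apply/eqP; rewrite eqn_leq le_n.
Qed.

Lemma AstarB_out n k : ~~ inbox ell k -> AstarB ell thS0 hS omS a n k = 0.
Proof.
move=> k_out; rewrite /AstarB Vb_out // mulr0 add0r.
by apply: big1 => p _; rewrite Vb_out ?mulr0.
Qed.

Lemma Astar_out (v : vect C N) k : ~~ inbox ell k -> Astar ell thS0 hS omS a v k = 0.
Proof. by move=> k_out; apply: big1 => n _; rewrite AstarB_out ?mulr0. Qed.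

End Coordinates.

Section EigenVector.
Variables (C : numClosedFieldType) (N : nat) (ell : 'I_N -> nat) (omS : C) (a : 'I_N -> C).
Variable i : 'I_N -> nat.
Hypothesis le_i_ell : forall p, (i p <= ell p)%N.

Lemma Vi_toZ n :
  Vi ell omS a i (toZ n) = if [forall p, (n p <= i p)%N] then Dcoef ell omS a n i else 0.
Proof.
rewrite /Vi (boxsum_delta (n0 := n)) => [|n' _ ne]; last by rewrite Vb_neq ?mulr0 // => /toZ_inj.
case: ifP => // /forallP le_ni; rewrite Vb_toZ ?mulr1 // => p.
exact: leq_trans (le_ni p) (le_i_ell p).
Qed.

Lemma Vi_out k : ~~ inbox ell k -> Vi ell omS a i k = 0.
Proof. by move=> k_out; apply: big1 => n _; rewrite Vb_out ?mulr0. Qed.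

Lemma Vi_eigen_coord thS0 hS n :
  (forall k : nat, (1 <= k <= (2 * totn ell).-1)%N -> omS != - k%:R) ->
  thetaS thS0 hS omS (totn n) * Vi ell omS a i (toZ n)
  + \sum_p xiS ell hS omS a (toZ n) p * Vi ell omS a i (toZ (addE n p))
  = thetaS thS0 hS omS (totn i) * Vi ell omS a i (toZ n).
Proof.
move=> HomS; rewrite Vi_toZ; under eq_bigr => p _ do rewrite Vi_toZ.
case: ifP => [/forallP le_ni | /negbT n_out].
  rewrite -(Dcoef_eigen a le_i_ell thS0 hS HomS le_ni); congr (_ + _).
  by rewrite [RHS]big_mkcond; apply: eq_bigr => p _; rewrite addE_le //; case: ifP; rewrite ?mulr0.
rewrite big1 ?mulr0 ?addr0 // => p _; case: ifP => [/forallP le_addE | _]; last by rewrite mulr0.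
by case/negP: n_out; apply/forallP => q; apply: leq_trans (le_addE q); apply: leq_addr.
Qed.

End EigenVector.

Theorem mainTheorem4 (C : numClosedFieldType) (N : nat) (ell : 'I_N -> nat)
  (th0 thS0 h hS om omS : C) (a : 'I_N -> C)
  (hN0 : h != 0) (hSN0 : hS != 0)
  (Hom : forall k : nat, (1 <= k <= (2 * totn ell).-1)%N -> om != - k%:R)
  (HomS : forall k : nat, (1 <= k <= (2 * totn ell).-1)%N -> omS != - k%:R)
  (Ha : forall (p : 'I_N) (k : nat), (1 <= k <= ell p)%N ->
     [/\ a p != - k%:R,
         a p + om - omS != - k%:R,
         a p - (totn ell)%:R - omS != - k%:R &
         a p + (totn ell)%:R + om != - k%:R])
  (Hgp : forall (p q : 'I_N) (sp sq : bool),
     general_position (Sset om omS sp (ell p) (a p)) (Sset om omS sq (ell q) (a q)))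
  (i : 'I_N -> nat) (Hi : forall p, (i p <= ell p)%N) :
  forall m : 'I_N -> int,
    Astar ell thS0 hS omS a (Vi ell omS a i) m
    = thetaS thS0 hS omS (totn i) * Vi ell omS a i m.
Proof.
move=> m; case: (boolP (inbox ell m)) => [/inboxP [n le_n ->] | m_out].
  by rewrite Astar_toZ // Vi_eigen_coord.
by rewrite Astar_out // Vi_out // mulr0.
Qed.
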